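(* Let $K$ be a field with $\operatorname{char}(K)\neq2$ and let $(M,N,(\cdot_1,\cdot_2),\partial,(\{-,-\},\langle-,-\rangle))$ be a braided crossed module of Leibniz $K$-algebras. Then $(M\rtimes N,N,\bar s,\bar t,\bar e,\bar k,(\bar\tau,\bar\psi))$ is a braided categorical Leibniz $K$-algebra, where $\bar s(m,n)=n$, $\bar t(m,n)=\partial m+n$, $\bar e(n)=(0,n)$, $\bar k\colon (M\rtimes N)\times_N(M\rtimes N)\to M\rtimes N$ (pullback of $\bar t$ and $\bar s$) is $\bar k((m,n),(m',\partial m+n))=(m+m',n)$, $\bar\tau_{n,n'}=(-2\{n,n'\},[n,n'])$ and $\bar\psi_{n,n'}=(-2\langle n,n'\rangle,[n,n'])$.
   Context: A Leibniz $K$-algebra is a $K$-vector space with a bilinear bracket satisfying $[x,[y,z]]=[[x,y],z]-[[x,z],y]$. A Leibniz action of $N$ on $M$ is a pair of bilinear maps $\cdot_1\colon N\times M\to M$, $\cdot_2\colon M\times N\to M$ with: $n\cdot_1[m,m']=[n\cdot_1m,m']-[n\cdot_1m',m]$; $[m,n\cdot_1m']=[m\cdot_2n,m']-[m,m']\cdot_2n$; $[m,m'\cdot_2n]=[m,m']\cdot_2n-[m\cdot_2n,m']$; $m\cdot_2[n,n']=(m\cdot_2n)\cdot_2n'-(m\cdot_2n')\cdot_2n$; $n\cdot_1(m\cdot_2n')=(n\cdot_1m)\cdot_2n'-[n,n']\cdot_1m$; $n\cdot_1(n'\cdot_1m)=[n,n']\cdot_1m-(n\cdot_1m)\cdot_2n'$.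 The semidirect product $M\rtimes N$ is $M\times N$ with $[(m,n),(m',n')]=([m,m']+n\cdot_1m'+m\cdot_2n',[n,n'])$. A crossed module $(M,N,(\cdot_1,\cdot_2),\partial)$: such an action and a Leibniz homomorphism $\partial\colon M\to N$ with $\partial(n\cdot_1m)=[n,\partial m]$, $\partial(m\cdot_2n)=[\partial m,n]$, $\partial(m)\cdot_1m'=[m,m']=m\cdot_2\partial(m')$. A braiding is a pair of bilinear maps $\{-,-\},\langle-,-\rangle\colon N\times N\to M$ with, for all $m,m'\in M$, $n,n',n''\in N$: $\partial\{n,n'\}=[n,n']=\partial\langle n,n'\rangle$; $\{\partial m,\partial m'\}=[m,m']=\langle\partial m,\partial m'\rangle$; $\{\partial m,n\}=m\cdot_2n=\langle\partial m,n\rangle$; $\{n,\partial m\}=n\cdot_1m=\langle n,\partial m\rangle$; $\{n,[n',n'']\}=\{[n,n'],n''\}-\{[n,n''],n'\}$; $\langle n,[n',n'']\rangle=\{[n,n'],n''\}-\langle[n,n''],n'\rangle$; $\{n,[n',n'']\}=\{[n,n'],n''\}-\langle[n,n''],n'\rangle$; $\langle n,[n',n'']\rangle=\langle[n,n'],n''\rangle-\langle[n,n''],n'\rangle$. A categorical Leibniz algebra $(C_1,C_0,s,t,e,k)$ is an internal category in Leibniz algebras: Leibniz homomorphisms $s,t\colon C_1\to C_0$, $e\colon C_0\to C_1$, $k\colon C_1\times_{C_0}C_1=\{(x,y):t(x)=s(y)\}\to C_1$ with $se=te=\mathrm{Id}$, $s(k(x,y))=s(x)$, $t(k(x,y))=t(y)$,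 $k(e(s(x)),x)=x=k(x,e(t(x)))$, $k$ associative. A braiding on it is a pair of bilinear maps $\tau,\psi\colon C_0\times C_0\to C_1$ with, for all $a,b,c\in C_0$, $x,y\in C_1$: $s(\tau_{a,b})=s(\psi_{a,b})=[a,b]$, $t(\tau_{a,b})=t(\psi_{a,b})=-[a,b]$; $k([x,y],\tau_{t(x),t(y)})=k(\tau_{s(x),s(y)},-[x,y])$ and likewise for $\psi$; $\tau_{a,[b,c]}=\tau_{[a,b],c}-\tau_{[a,c],b}$; $\psi_{a,[b,c]}=\tau_{[a,b],c}-\psi_{[a,c],b}$; $\tau_{a,[b,c]}=\tau_{[a,b],c}-\psi_{[a,c],b}$; $\psi_{a,[b,c]}=\psi_{[a,b],c}-\psi_{[a,c],b}$. *)

From HB Require Import structures.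
From mathcomp Require Import all_boot all_algebra.
Set Implicit Arguments. Unset Strict Implicit. Unset Printing Implicit Defensive.
Import GRing.Theory.
Local Open Scope ring_scope.

(* Leibniz K-algebras are represented as K-vector spaces (lmodType K) with a
   bracket satisfying bilinearity and the (right) Leibniz identity. *)

Definition linmap (K : fieldType) (U V : lmodType K) (f : U -> V) : Prop :=
  forall (a : K) (x y : U), f (a *: x + y) = a *: f x + f y.

Definition bilinear (K : fieldType) (U V W : lmodType K) (f : U -> V -> W) : Prop :=
  (forall (a : K) (x y : U) (z : V), f (a *: x + y) z = a *: f x z + f y z) /\
  (forall (a : K) (x : U) (y z : V), f x (a *: y + z) = a *: f x y + f x z).

Definition leibniz (K : fieldType) (L : lmodType K) (br : L -> L -> L) : Prop :=
  bilinear br /\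
  forall x y z : L, br x (br y z) = br (br x y) z - br (br x z) y.

Definition leibniz_hom (K : fieldType) (L1 L2 : lmodType K)
  (br1 : L1 -> L1 -> L1) (br2 : L2 -> L2 -> L2) (f : L1 -> L2) : Prop :=
  linmap f /\ forall x y, f (br1 x y) = br2 (f x) (f y).

Definition leibniz_action (K : fieldType) (M N : lmodType K)
  (brM : M -> M -> M) (brN : N -> N -> N)
  (act1 : N -> M -> M) (act2 : M -> N -> M) : Prop :=
  bilinear act1 /\ bilinear act2 /\
  (forall n m m', act1 n (brM m m') = brM (act1 n m) m' - brM (act1 n m') m) /\
  (forall m n m', brM m (act1 n m') = brM (act2 m n) m' - act2 (brM m m') n) /\
  (forall m m' n, brM m (act2 m' n) = act2 (brM m m') n - brM (act2 m n) m') /\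
  (forall m n n', act2 m (brN n n') = act2 (act2 m n) n' - act2 (act2 m n') n) /\
  (forall n m n', act1 n (act2 m n') = act2 (act1 n m) n' - act1 (brN n n') m) /\
  (forall n n' m, act1 n (act1 n' m) = act1 (brN n n') m - act2 (act1 n m) n').

Definition sd_br (K : fieldType) (M N : lmodType K)
  (brM : M -> M -> M) (brN : N -> N -> N)
  (act1 : N -> M -> M) (act2 : M -> N -> M) (x y : M * N) : M * N :=
  (brM x.1 y.1 + act1 x.2 y.1 + act2 x.1 y.2, brN x.2 y.2).

Definition crossed_module (K : fieldType) (M N : lmodType K)
  (brM : M -> M -> M) (brN : N -> N -> N)
  (act1 : N -> M -> M) (act2 : M -> N -> M) (d : M -> N) : Prop :=
  leibniz brM /\ leibniz brN /\ leibniz_action brM brN act1 act2 /\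
  leibniz_hom brM brN d /\
  (forall n m, d (act1 n m) = brN n (d m)) /\
  (forall m n, d (act2 m n) = brN (d m) n) /\
  (forall m m', act1 (d m) m' = brM m m') /\
  (forall m m', act2 m (d m') = brM m m').

Definition braiding (K : fieldType) (M N : lmodType K)
  (brM : M -> M -> M) (brN : N -> N -> N)
  (act1 : N -> M -> M) (act2 : M -> N -> M) (d : M -> N)
  (br1 br2 : N -> N -> M) : Prop :=
  bilinear br1 /\ bilinear br2 /\
  (forall n n', d (br1 n n') = brN n n' /\ d (br2 n n') = brN n n') /\
  (forall m m', br1 (d m) (d m') = brM m m' /\ br2 (d m) (d m') = brM m m') /\
  (forall m n, br1 (d m) n = act2 m n /\ br2 (d m) n = act2 m n) /\
  (forall n m, br1 n (d m) = act1 n m /\ br2 n (d m) = act1 n m) /\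
  (forall n n' n'',
     br1 n (brN n' n'') = br1 (brN n n') n'' - br1 (brN n n'') n') /\
  (forall n n' n'',
     br2 n (brN n' n'') = br1 (brN n n') n'' - br2 (brN n n'') n') /\
  (forall n n' n'',
     br1 n (brN n' n'') = br1 (brN n n') n'' - br2 (brN n n'') n') /\
  (forall n n' n'',
     br2 n (brN n' n'') = br2 (brN n n') n'' - br2 (brN n n'') n').

Definition braided_crossed_module (K : fieldType) (M N : lmodType K)
  (brM : M -> M -> M) (brN : N -> N -> N)
  (act1 : N -> M -> M) (act2 : M -> N -> M) (d : M -> N)
  (br1 br2 : N -> N -> M) : Prop :=
  crossed_module brM brN act1 act2 d /\ braiding brM brN act1 act2 d br1 br2.

(* The composition k is
   given as a map C1 -> C1 -> C1; only its values on the pullback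
   C1 x_{C0} C1 = {(x,y) | t x = s y} matter, and all conditions on k are
   imposed only on composable pairs.  The pullback carries the componentwise
   Leibniz structure of C1 x C1 (it is a subalgebra since s, t are
   homomorphisms); "k is a Leibniz homomorphism" is stated on it. *)
Definition categorical_leibniz (K : fieldType) (C1 C0 : lmodType K)
  (br1 : C1 -> C1 -> C1) (br0 : C0 -> C0 -> C0)
  (s t : C1 -> C0) (e : C0 -> C1) (k : C1 -> C1 -> C1) : Prop :=
  leibniz br1 /\ leibniz br0 /\
  leibniz_hom br1 br0 s /\ leibniz_hom br1 br0 t /\ leibniz_hom br0 br1 e /\
  (forall (a : K) x y x' y', t x = s y -> t x' = s y' ->
      k (a *: x + x') (a *: y + y') = a *: k x y + k x' y') /\
  (forall x y x' y', t x = s y -> t x' = s y' ->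
      k (br1 x x') (br1 y y') = br1 (k x y) (k x' y')) /\
  (forall a, s (e a) = a) /\ (forall a, t (e a) = a) /\
  (forall x y, t x = s y -> s (k x y) = s x) /\
  (forall x y, t x = s y -> t (k x y) = t y) /\
  (forall x, k (e (s x)) x = x) /\ (forall x, k x (e (t x)) = x) /\
  (forall x y z, t x = s y -> t y = s z -> k (k x y) z = k x (k y z)).

Definition cat_braiding (K : fieldType) (C1 C0 : lmodType K)
  (br1 : C1 -> C1 -> C1) (br0 : C0 -> C0 -> C0)
  (s t : C1 -> C0) (k : C1 -> C1 -> C1) (tau psi : C0 -> C0 -> C1) : Prop :=
  bilinear tau /\ bilinear psi /\
  (forall a b, s (tau a b) = br0 a b /\ s (psi a b) = br0 a b) /\
  (forall a b, t (tau a b) = - br0 a b /\ t (psi a b) = - br0 a b) /\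
  (forall x y, k (br1 x y) (tau (t x) (t y)) = k (tau (s x) (s y)) (- br1 x y)) /\
  (forall x y, k (br1 x y) (psi (t x) (t y)) = k (psi (s x) (s y)) (- br1 x y)) /\
  (forall a b c, tau a (br0 b c) = tau (br0 a b) c - tau (br0 a c) b) /\
  (forall a b c, psi a (br0 b c) = tau (br0 a b) c - psi (br0 a c) b) /\
  (forall a b c, tau a (br0 b c) = tau (br0 a b) c - psi (br0 a c) b) /\
  (forall a b c, psi a (br0 b c) = psi (br0 a b) c - psi (br0 a c) b).

Definition braided_categorical_leibniz (K : fieldType) (C1 C0 : lmodType K)
  (br1 : C1 -> C1 -> C1) (br0 : C0 -> C0 -> C0)
  (s t : C1 -> C0) (e : C0 -> C1) (k : C1 -> C1 -> C1)
  (tau psi : C0 -> C0 -> C1) : Prop :=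
  categorical_leibniz br1 br0 s t e k /\ cat_braiding br1 br0 s t k tau psi.

(** The semidirect product [M ⋊ N] with source [(m, n) ↦ n], target [(m, n) ↦ ∂m + n] and
    composition [(m, n)(m', ∂m + n) = (m + m', n)] is an internal category because [∂] is
    equivariant (so the target is a homomorphism) and because of the Peiffer identities
    [∂m · m' = [m, m'] = m · ∂m'] (so composition preserves brackets on composable pairs).
    For the braiding, expanding bilinearly with the axioms for [{∂-, ∂-}], [{∂-, -}] and
    [{-, ∂-}] gives [{∂m + n, ∂m' + n'} = [(m, n), (m', n')]_M + {n, n'}]; hence the
    [M]-components of [τ_{t x, t y}] and [τ_{s x, s y}] differ by [-2 [x, y]_M], which is
    exactly what the naturality square for [τ = (-2{-, -}, [-, -])] requires. *)

From HB Require Import structures.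
From mathcomp Require Import all_boot all_algebra.
Set Implicit Arguments. Unset Strict Implicit. Unset Printing Implicit Defensive.
Import GRing.Theory.
Local Open Scope ring_scope.

Inductive zterm := ZVar of nat | ZZero | ZAdd of zterm & zterm | ZOpp of zterm.

Fixpoint zeval (V : zmodType) (vs : seq V) (t : zterm) : V :=
  match t with
  | ZVar i => vs`_i
  | ZZero => 0
  | ZAdd t u => zeval vs t + zeval vs u
  | ZOpp t => - zeval vs t
  end.

Fixpoint zcoef (t : zterm) (i : nat) : int :=
  match t with
  | ZVar j => (j == i)%:Z
  | ZZero => 0
  | ZAdd t u => zcoef t i + zcoef u i
  | ZOpp t => - zcoef t i
  end.

Lemma zeval_coef (V : zmodType) (vs : seq V) t :
  zeval vs t = \sum_(i < size vs) vs`_i *~ zcoef t i.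
Proof.
elim: t => [j||t IHt u IHu|t IHt] /=.
- have coef0 (i : 'I_(size vs)) : i != j :> nat -> vs`_i *~ (j == i)%:Z = 0.
    by rewrite eq_sym => /negPf ->; rewrite mulr0z.
  case: (ltnP j (size vs)) => [lt_j | le_j].
    by rewrite (bigD1 (Ordinal lt_j)) //= eqxx mulr1z (big1 _ _ _ coef0) addr0.
  rewrite nth_default // big1 // => i _; apply: coef0.
  by rewrite neq_ltn (leq_trans (ltn_ord i) le_j).
- by rewrite big1 // => i _; rewrite mulr0z.
- by rewrite IHt IHu -big_split; apply: eq_bigr => i _; rewrite mulrzDr.
- by rewrite IHt -sumrN; apply: eq_bigr => i _; rewrite mulrNz.
Qed.

Lemma zeval_eq (V : zmodType) (vs : seq V) t u :
  all (fun i => zcoef t i == zcoef u i) (iota 0 (size vs)) -> zeval vs t = zeval vs u.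
Proof.
move/allP=> eq_coef; rewrite !zeval_coef; apply: eq_bigr => i _.
by rewrite (eqP (eq_coef i _)) // mem_iota ltn_ord.
Qed.

(* Atoms are compared up to conversion, since instances of the same term may be
   built through different structure paths. *)
Ltac zindex x l :=
  match l with
  | ?y :: _ => let _ := constr:(erefl x : x = y) in constr:(0%N)
  | _ :: ?r => let n := zindex x r in constr:(n.+1)
  end.

Ltac zatoms t l :=
  lazymatch t with
  | 0%R => l
  | (?a + ?b)%R => let l := zatoms a l in zatoms b l
  | (- ?a)%R => zatoms a l
  | _ => match constr:(tt) with
         | _ => let _ := zindex t l in l
         | _ => constr:(t :: l)
         end
  end.

Ltac zreify t l :=
  lazymatch t with
  | 0%R => constr:(ZZero)
  | (?a + ?b)%R => let ta := zreify a l in let tb := zreify b l in constr:(ZAdd ta tb)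
  | (- ?a)%R => let ta := zreify a l in constr:(ZOpp ta)
  | _ => let i := zindex t l in constr:(ZVar i)
  end.

(* Decides identities between Z-linear combinations of atoms in a zmodType by comparing
   the coefficients of each atom. *)
Ltac abel :=
  lazymatch goal with
  | |- @eq ?V ?a ?b =>
    let l := zatoms a (@nil V) in
    let l := zatoms b l in
    let ta := zreify a l in
    let tb := zreify b l in
    change (zeval l ta = zeval l tb); apply: zeval_eq; vm_compute; reflexivity
  end.

Section Bilinear.
Variables (K : fieldType) (U V W : lmodType K) (f : U -> V -> W).
Hypothesis bil_f : bilinear f.

Lemma bilinearDl x y z : f (x + y) z = f x z + f y z.
Proof. by have := bil_f.1 1 x y z; rewrite !scale1r. Qed.

Lemma bilinearDr x y z : f x (y + z) = f x y + f x z.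
Proof. by have := bil_f.2 1 x y z; rewrite !scale1r. Qed.

Lemma bilinear0l z : f 0 z = 0.
Proof. by apply: (addrI (f 0 z)); rewrite -bilinearDl !addr0. Qed.

Lemma bilinear0r x : f x 0 = 0.
Proof. by apply: (addrI (f x 0)); rewrite -bilinearDr !addr0. Qed.

Lemma bilinearZl a x z : f (a *: x) z = a *: f x z.
Proof. by have := bil_f.1 a x 0 z; rewrite !addr0 bilinear0l addr0. Qed.

Lemma bilinearZr a x y : f x (a *: y) = a *: f x y.
Proof. by have := bil_f.2 a x y 0; rewrite !addr0 bilinear0r addr0. Qed.

End Bilinear.

Section Linmap.
Variables (K : fieldType) (U V : lmodType K) (f : U -> V).
Hypothesis lin_f : linmap f.

Lemma linmapD x y : f (x + y) = f x + f y.
Proof. by have := lin_f 1 x y; rewrite !scale1r. Qed.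

Lemma linmap0 : f 0 = 0.
Proof. by apply: (addrI (f 0)); rewrite -linmapD !addr0. Qed.

Lemma linmapZ a x : f (a *: x) = a *: f x.
Proof. by have := lin_f a x 0; rewrite !addr0 linmap0 addr0. Qed.

End Linmap.

Ltac expand_linear :=
  repeat match goal with
  | H : bilinear _ |- _ => progress rewrite ?(bilinearDl H, bilinearDr H, bilinear0l H,
                                               bilinear0r H, bilinearZl H, bilinearZr H)
  | H : linmap _ |- _ => progress rewrite ?(linmapD H, linmap0 H, linmapZ H)
  end.

Section BraidedCrossedModule.
Variables (K : fieldType) (M N : lmodType K).
Variables (brM : M -> M -> M) (brN : N -> N -> N).
Variables (act1 : N -> M -> M) (act2 : M -> N -> M) (d : M -> N).

Hypotheses (bilM : bilinear brM) (bilN : bilinear brN).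
Hypothesis leibM : forall x y z, brM x (brM y z) = brM (brM x y) z - brM (brM x z) y.
Hypothesis leibN : forall x y z, brN x (brN y z) = brN (brN x y) z - brN (brN x z) y.

Hypotheses (bil1 : bilinear act1) (bil2 : bilinear act2).
Hypothesis act1_brM : forall n m m', act1 n (brM m m') = brM (act1 n m) m' - brM (act1 n m') m.
Hypothesis brM_act1 : forall m n m', brM m (act1 n m') = brM (act2 m n) m' - act2 (brM m m') n.
Hypothesis brM_act2 : forall m m' n, brM m (act2 m' n) = act2 (brM m m') n - brM (act2 m n) m'.
Hypothesis act2_brN :
  forall m n n', act2 m (brN n n') = act2 (act2 m n) n' - act2 (act2 m n') n.
Hypothesis act1_act2 :
  forall n m n', act1 n (act2 m n') = act2 (act1 n m) n' - act1 (brN n n') m.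
Hypothesis act1_act1 :
  forall n n' m, act1 n (act1 n' m) = act1 (brN n n') m - act2 (act1 n m) n'.

Local Notation sd := (sd_br brM brN act1 act2).

Lemma sd_br_bilinear : bilinear sd.
Proof.
by split=> a [x1 x2] [y1 y2] [z1 z2]; apply: injective_projections => /=;
  expand_linear; rewrite ?scalerDr; abel.
Qed.

Lemma sd_br_leibniz : leibniz sd.
Proof.
split; first exact: sd_br_bilinear.
move=> [x1 x2] [y1 y2] [z1 z2]; apply: injective_projections => /=; last exact: leibN.
expand_linear.
rewrite leibM act1_brM brM_act1 brM_act2 act2_brN act1_act2 act1_act1.
abel.
Qed.

Hypotheses (lin_d : linmap d) (d_brM : forall m m', d (brM m m') = brN (d m) (d m')).
Hypothesis d_act1 : forall n m, d (act1 n m) = brN n (d m).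
Hypothesis d_act2 : forall m n, d (act2 m n) = brN (d m) n.
Hypothesis peiffer1 : forall m m', act1 (d m) m' = brM m m'.
Hypothesis peiffer2 : forall m m', act2 m (d m') = brM m m'.

Definition arrow_src (x : M * N) : N := x.2.
Definition arrow_tgt (x : M * N) : N := d x.1 + x.2.
Definition arrow_id (n : N) : M * N := (0, n).
Definition arrow_comp (x y : M * N) : M * N := (x.1 + y.1, x.2).

Lemma arrow_src_hom : leibniz_hom sd brN arrow_src.
Proof. by []. Qed.

Lemma arrow_tgt_hom : leibniz_hom sd brN arrow_tgt.
Proof.
rewrite /arrow_tgt; split=> [a [x1 x2] [y1 y2] | [x1 x2] [y1 y2]] /=; expand_linear.
  by rewrite scalerDr; abel.
by rewrite d_brM d_act1 d_act2; abel.
Qed.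

Lemma arrow_id_hom : leibniz_hom brN sd arrow_id.
Proof.
by split=> [a n n' | n n']; apply: injective_projections => //=;
  expand_linear; rewrite ?scaler0 !addr0.
Qed.

Lemma arrow_comp_linear a x y x' y' :
  arrow_comp (a *: x + x') (a *: y + y') = a *: arrow_comp x y + arrow_comp x' y'.
Proof. by apply: injective_projections => /=; rewrite ?scalerDr; abel. Qed.

Lemma arrow_comp_br x y x' y' :
  arrow_tgt x = arrow_src y -> arrow_tgt x' = arrow_src y' ->
  arrow_comp (sd x x') (sd y y') = sd (arrow_comp x y) (arrow_comp x' y').
Proof.
case: x y x' y' => [x1 x2] [y1 y2] [x1' x2'] [y1' y2'].
rewrite /arrow_tgt /arrow_src /arrow_comp /= => <- <-; apply: injective_projections => //=.
by expand_linear; rewrite peiffer1 peiffer2; abel.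
Qed.

Lemma arrow_tgt_comp x y :
  arrow_tgt x = arrow_src y -> arrow_tgt (arrow_comp x y) = arrow_tgt y.
Proof.
case: x y => [x1 x2] [y1 y2]; rewrite /arrow_tgt /arrow_src /= => <-.
by rewrite (linmapD lin_d); abel.
Qed.

Lemma crossed_module_categorical :
  categorical_leibniz sd brN arrow_src arrow_tgt arrow_id arrow_comp.
Proof.
split; first exact: sd_br_leibniz.
split; first exact: (conj bilN leibN).
split; first exact: arrow_src_hom.
split; first exact: arrow_tgt_hom.
split; first exact: arrow_id_hom.
split; first by move=> *; apply: arrow_comp_linear.
split; first exact: arrow_comp_br.
split; first by [].
split; first by move=> n; rewrite /arrow_tgt /= (linmap0 lin_d) add0r.
split; first by [].
split; first exact: arrow_tgt_comp.
split; first by case=> x1 x2; rewrite /arrow_comp /= add0r.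
split; first by case=> x1 x2; rewrite /arrow_comp /= addr0.
by move=> x y z _ _; rewrite /arrow_comp /= addrA.
Qed.

Section BraidingComponent.
Variable br : N -> N -> M.
Hypotheses (bil_br : bilinear br) (d_br : forall n n', d (br n n') = brN n n').
Hypothesis br_dd : forall m m', br (d m) (d m') = brM m m'.
Hypothesis br_dl : forall m n, br (d m) n = act2 m n.
Hypothesis br_dr : forall n m, br n (d m) = act1 n m.

Definition braid_arrow (n n' : N) : M * N := (- 2%:R *: br n n', brN n n').

Lemma braid_arrow_bilinear : bilinear braid_arrow.
Proof.
by split=> a x y z; apply: injective_projections => /=;
  expand_linear; rewrite ?scalerDr ?scalerA ?[_ * a]mulrC.
Qed.

Lemma arrow_tgt_braid n n' : arrow_tgt (braid_arrow n n') = - brN n n'.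
Proof.
rewrite /arrow_tgt /= (linmapZ lin_d) d_br scaleNr scaler_nat mulr2n.
abel.
Qed.

Lemma br_arrow_tgt x y :
  br (arrow_tgt x) (arrow_tgt y) = (sd x y).1 + br (arrow_src x) (arrow_src y).
Proof.
case: x y => [x1 x2] [y1 y2]; rewrite /arrow_tgt /arrow_src /=.
by expand_linear; rewrite br_dd br_dl br_dr; abel.
Qed.

Lemma braid_arrow_natural x y :
  arrow_comp (sd x y) (braid_arrow (arrow_tgt x) (arrow_tgt y)) =
  arrow_comp (braid_arrow (arrow_src x) (arrow_src y)) (- sd x y).
Proof.
rewrite /braid_arrow br_arrow_tgt /arrow_comp; apply: injective_projections => //=.
by rewrite scalerDr !scaleNr !scaler_nat !mulr2n; abel.
Qed.

End BraidingComponent.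

Lemma braid_arrow_hexagon (f g h : N -> N -> M) :
  (forall a b c, f a (brN b c) = g (brN a b) c - h (brN a c) b) ->
  forall a b c, braid_arrow f a (brN b c) = braid_arrow g (brN a b) c - braid_arrow h (brN a c) b.
Proof.
move=> fgh a b c; apply: injective_projections => /=; last exact: leibN.
by rewrite fgh scalerBr.
Qed.

Lemma braiding_cat_braiding br1 br2 :
  braiding brM brN act1 act2 d br1 br2 ->
  cat_braiding sd brN arrow_src arrow_tgt arrow_comp (braid_arrow br1) (braid_arrow br2).
Proof.
move=> [bil_br1 [bil_br2 [d_br [br_dd [br_dl [br_dr [hex1 [hex2 [hex3 hex4]]]]]]]]].
have d_br1 n n' := (d_br n n').1; have d_br2 n n' := (d_br n n').2.
have br_dd1 m m' := (br_dd m m').1; have br_dd2 m m' := (br_dd m m').2.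
have br_dl1 m n := (br_dl m n).1; have br_dl2 m n := (br_dl m n).2.
have br_dr1 n m := (br_dr n m).1; have br_dr2 n m := (br_dr n m).2.
split; first exact: braid_arrow_bilinear.
split; first exact: braid_arrow_bilinear.
split; first by [].
split; first by move=> n n'; rewrite !arrow_tgt_braid.
split; first exact: braid_arrow_natural.
split; first exact: braid_arrow_natural.
by do 3![split; first exact: braid_arrow_hexagon]; exact: braid_arrow_hexagon.
Qed.

End BraidedCrossedModule.

Theorem mainTheorem2 (K : fieldType) (M N : lmodType K)
  (brM : M -> M -> M) (brN : N -> N -> N)
  (act1 : N -> M -> M) (act2 : M -> N -> M) (d : M -> N)
  (br1 br2 : N -> N -> M) :
  (2%:R : K) != 0 ->
  braided_crossed_module brM brN act1 act2 d br1 br2 ->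
  braided_categorical_leibniz (C1 := (M * N)%type) (C0 := N)
    (sd_br brM brN act1 act2) brN
    (fun x : M * N => x.2)
    (fun x : M * N => d x.1 + x.2)
    (fun n : N => (0 : M, n))
    (fun x y : M * N => (x.1 + y.1, x.2))
    (fun n n' : N => (- (2%:R : K) *: br1 n n', brN n n'))
    (fun n n' : N => (- (2%:R : K) *: br2 n n', brN n n')).
Proof.
move=> _ [[[bilM leibM] [[bilN leibN] [action [[lin_d d_brM] [d_act1 [d_act2 peiffer]]]]]] braid].
case: action => [bil1 [bil2 [act1_brM [brM_act1 [brM_act2 [act2_brN [act1_act2 act1_act1]]]]]]].
case: peiffer => [peiffer1 peiffer2].
split; first exact: crossed_module_categorical.
exact: braiding_cat_braiding.
Qed.
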